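(* Let $t>0$ and let $\mathcal{F}$ be a 2-cutset-safe hereditary graph class. Let $G\in\mathcal{F}$ and let $H$ be the prime base of an $\mathcal{F}$ prime decomposition of $G$. Then $\operatorname{tw}(G)=\operatorname{tw}(H)$. Further, letting $\mathcal{J}\subseteq\mathcal{F}$ be the set of all prime graphs in $\mathcal{F}$, we have $\operatorname{tw}(G)\le\max_{J\in\mathcal{J}}\operatorname{tw}(J)$.
   Context: All graphs are finite and simple; $\operatorname{tw}$ denotes treewidth; a hereditary graph class is one closed under taking induced subgraphs (and isomorphism). A clique cutset of $G$ is a clique $K$ of $G$ such that $G\setminus K$ is not connected. A connected graph $G$ has a 1-cutset if there is $x\in V(G)$ such that $G\setminus\{x\}$ has at least two components. A 2-cutset is a pair of vertices $u,v$ with $G\setminus\{u,v\}$ not connected; it is proper if $V(G)\setminus\{u,v\}$ can be partitioned into two sets $X,Y$ with $X$ anticomplete to $Y$ (no edges between them) and $|X|,|Y|\ge 2$. For a component $C$ of $G\setminus\{u,v\}$, $\operatorname{cl}(C)$ is obtained from the subgraph induced by $C\cup\{u,v\}$ by adding the edge $uv$, and $\operatorname{cl}^*(C)$ is obtained from $\operatorname{cl}(C)$ by subdividing the edge $uv$ exactly once. The class $\mathcal{F}$ is 2-cutset-safe if for every $G\in\mathcal{F}$ with no 1-cutset, every 2-cutset $\{u,v\}$ of $G$ and every component $C$ of $G\setminus\{u,v\}$, either $\operatorname{cl}(C)\in\mathcal{F}$ or $\operatorname{cl}^*(C)\in\mathcal{F}$. A graph is prime if it has no clique cutset and no proper 2-cutset.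 For $G\in\mathcal{F}$, an $\mathcal{F}$ prime decomposition of $G$ is a sequence $(G_0,\dots,G_k)$ defined as follows: $G_0=G$; for $i\ge1$, if $G_{i-1}$ is prime the sequence ends (with $k=i-1$); otherwise, if $i$ is odd, $G_i$ is an induced subgraph of $G_{i-1}$ with no clique cutset and, subject to that, of maximum treewidth; if $i$ is even, then $G_{i-1}$ has no clique cutset but is not prime, so it has a proper 2-cutset $\{u,v\}$; letting $C_1,\dots,C_m$ be the components of $G_{i-1}\setminus\{u,v\}$, $G_i$ is a graph of maximum treewidth in $\mathcal{F}\cap\{\operatorname{cl}(C_1),\dots,\operatorname{cl}(C_m),\operatorname{cl}^*(C_1),\dots,\operatorname{cl}^*(C_m)\}$. The last graph $G_k$ is prime and is called the prime base of the decomposition. *)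

From Stdlib Require Import ClassicalEpsilon.
From mathcomp Require Import all_boot.

Set Implicit Arguments.
Unset Strict Implicit.
Unset Printing Implicit Defensive.

Record graph := Graph {
  vert : finType;
  adj : rel vert;
  adj_sym : symmetric adj;
  adj_irr : irreflexive adj }.
Arguments adj : clear implicits.
Arguments adj_sym : clear implicits.
Arguments adj_irr : clear implicits.

(* x and y are joined by a path all of whose vertices lie in S
   (trivially true when x = y). *)
Definition connect_in (G : graph) (S : {set vert G}) (x y : vert G) : bool :=
  connect [rel a b | (a \in S) && (b \in S) && adj G a b] x y.

Definition connected_on (G : graph) (S : {set vert G}) : Prop :=
  forall x y, x \in S -> y \in S -> connect_in S x y.

(* G is connected (the null graph counts as connected). *)
Definition connectedG (G : graph) : Prop := forall x y : vert G, connect (adj G) x y.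

Definition is_component (G : graph) (X C : {set vert G}) : Prop :=
  [/\ C \subset X, C != set0, connected_on C &
      forall x y, x \in C -> y \in X -> adj G x y -> y \in C].

Section Induced.
Variables (G : graph) (S : {set vert G}).
Definition ind_adj : rel {x : vert G | x \in S} :=
  fun x y => adj G (val x) (val y).
Lemma ind_adj_sym : symmetric ind_adj.
Proof. by move=> x y; rewrite /ind_adj adj_sym. Qed.
Lemma ind_adj_irr : irreflexive ind_adj.
Proof. by move=> x; rewrite /ind_adj adj_irr. Qed.
End Induced.

Definition induced (G : graph) (S : {set vert G}) : graph :=
  Graph (@ind_adj_sym G S) (@ind_adj_irr G S).

Definition iso (G H : graph) : Prop :=
  exists f : vert G -> vert H, bijective f /\
    forall x y, adj H (f x) (f y) = adj G x y.

Definition hereditary (F : graph -> Prop) : Prop :=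
  (forall G H, iso G H -> F G -> F H) /\
  (forall G (S : {set vert G}), F G -> F (induced S)).

Definition is_clique (G : graph) (K : {set vert G}) : Prop :=
  forall x y, x \in K -> y \in K -> x != y -> adj G x y.

(* a clique K (possibly empty) with G \ K not connected *)
Definition has_clique_cutset (G : graph) : Prop :=
  exists K : {set vert G}, is_clique K /\
    exists x y, x \notin K /\ y \notin K /\ ~ connect_in (~: K) x y.

Definition has_1cutset (G : graph) : Prop :=
  connectedG G /\ exists x y z : vert G,
    y != x /\ z != x /\ ~ connect_in (~: [set x]) y z.

Definition two_cutset (G : graph) (u v : vert G) : Prop :=
  u != v /\ exists x y, x \notin [set u; v] /\ y \notin [set u; v] /\
    ~ connect_in (~: [set u; v]) x y.

Definition proper_2cutset (G : graph) (u v : vert G) : Prop :=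
  u != v /\ exists X : {set vert G},
    [/\ X \subset ~: [set u; v], 1 < #|X|, 1 < #|(~: [set u; v]) :\: X| &
        forall x y, x \in X -> y \in (~: [set u; v]) :\: X -> ~~ adj G x y].

Definition is_prime (G : graph) : Prop :=
  ~ has_clique_cutset G /\ ~ (exists u v : vert G, proper_2cutset u v).

Section Closures.
Variables (G : graph) (u v : vert G) (C : {set vert G}).
Definition clV := {x : vert G | x \in C :|: [set u; v]}.

(* G[C ∪ {u,v}] plus the edge uv *)
Definition cl_adj : rel clV := fun x y =>
  adj G (val x) (val y) || ((val x != val y) && ([set val x; val y] == [set u; v])).
Lemma cl_adj_sym : symmetric cl_adj.
Proof. by move=> x y; rewrite /cl_adj adj_sym eq_sym [[set val y; val x]]setUC. Qed.
Lemma cl_adj_irr : irreflexive cl_adj.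
Proof. by move=> x; rewrite /cl_adj adj_irr eqxx. Qed.

(* cl(C) with the edge uv subdivided once (new vertex None) *)
Definition cls_adj : rel (option clV) := fun a b =>
  match a, b with
  | Some x, Some y => adj G (val x) (val y) && ~~ ([set val x; val y] == [set u; v])
  | Some x, None | None, Some x => (val x == u) || (val x == v)
  | None, None => false
  end.
Lemma cls_adj_sym : symmetric cls_adj.
Proof. by case=> [x|] [y|] //=; rewrite adj_sym [[set val y; val x]]setUC. Qed.
Lemma cls_adj_irr : irreflexive cls_adj.
Proof. by case=> [x|] //=; rewrite adj_irr. Qed.
End Closures.

Definition cl (G : graph) (u v : vert G) (C : {set vert G}) : graph :=
  Graph (@cl_adj_sym G u v C) (@cl_adj_irr G u v C).
Definition clstar (G : graph) (u v : vert G) (C : {set vert G}) : graph :=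
  Graph (@cls_adj_sym G u v C) (@cls_adj_irr G u v C).
(* b = false : cl(C);  b = true : cl*(C) *)
Definition clb (G : graph) (u v : vert G) (C : {set vert G}) (b : bool) : graph :=
  if b then clstar u v C else cl u v C.

Definition two_cutset_safe (F : graph -> Prop) : Prop :=
  forall (G : graph) (u v : vert G) (C : {set vert G}),
    F G -> connectedG G -> ~ has_1cutset G -> two_cutset u v ->
    is_component (~: [set u; v]) C -> F (cl u v C) \/ F (clstar u v C).

Definition is_tree (m : nat) (r : rel 'I_m) : Prop :=
  [/\ 0 < m, symmetric r, irreflexive r, (forall i j, connect r i j) &
      #|[set p : 'I_m * 'I_m | (val p.1 < val p.2) && r p.1 p.2]| = m.-1].

Definition tw_le (G : graph) (k : nat) : Prop :=
  exists (m : nat) (r : rel 'I_m) (B : 'I_m -> {set vert G}),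
  [/\ is_tree r,
      (forall x, exists i, x \in B i),
      (forall x y, adj G x y -> exists i, (x \in B i) && (y \in B i)),
      (forall x i j, x \in B i -> x \in B j ->
          connect [rel a b | r a b && (x \in B a) && (x \in B b)] i j) &
      (forall i, #|B i| <= k.+1)].

Lemma tw_le_ex (G : graph) : exists k, tw_le G k.
Proof.
exists #|vert G|, 1, [rel _ _ | false], (fun _ => setT); split.
- split=> //.
  + by move=> i j; rewrite (ord1 i) (ord1 j) connect0.
  + by apply/eqP; rewrite cards_eq0; apply/eqP/setP=> p; rewrite !inE andbF.
- by move=> x; exists ord0; rewrite inE.
- by move=> x y _; exists ord0; rewrite !inE.
- by move=> x i j _ _; rewrite (ord1 i) (ord1 j) connect0.
- by move=> i; rewrite cardsT leqnSn.
Qed.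

Definition tw_leb (G : graph) (k : nat) : bool :=
  if excluded_middle_informative (tw_le G k) then true else false.

Lemma tw_leb_ex (G : graph) : exists k, tw_leb G k.
Proof.
have [k hk] := tw_le_ex G; exists k; rewrite /tw_leb.
by case: excluded_middle_informative.
Qed.

(* treewidth (the null graph gets treewidth 0 rather than -1) *)
Definition tw (G : graph) : nat := ex_minn (tw_leb_ex G).

(* ---------- F prime decompositions ----------
   pdec F i G H : the decomposition currently at G_{i-1} = G (so the next
   graph to be produced is G_i) ends with prime base H.                     *)
Inductive pdec (F : graph -> Prop) : nat -> graph -> graph -> Prop :=
| pdec_end i G : is_prime G -> pdec F i G G
| pdec_odd i G (S : {set vert G}) H :
    ~ is_prime G -> odd i ->
    ~ has_clique_cutset (induced S) ->
    (forall S' : {set vert G}, ~ has_clique_cutset (induced S') ->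
        tw (induced S') <= tw (induced S)) ->
    pdec F i.+1 (induced S) H -> pdec F i G H
| pdec_even i G (u v : vert G) (C : {set vert G}) (b : bool) H :
    ~ is_prime G -> ~~ odd i -> ~ has_clique_cutset G ->
    proper_2cutset u v ->
    is_component (~: [set u; v]) C ->
    F (clb u v C b) ->
    (forall (C' : {set vert G}) (b' : bool), is_component (~: [set u; v]) C' ->
        F (clb u v C' b') -> tw (clb u v C' b') <= tw (clb u v C b)) ->
    pdec F i.+1 (clb u v C b) H -> pdec F i G H.

Definition prime_base (F : graph -> Prop) (G H : graph) : Prop := pdec F 1 G H.

From Stdlib Require Import ClassicalEpsilon Classical.
From mathcomp Require Import all_boot zify.

Set Implicit Arguments.
Unset Strict Implicit.
Unset Printing Implicit Defensive.

(* Treewidth does not increase under taking minors, and both reduction steps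
   of a prime decomposition preserve it.  If K is a clique cutset, tree
   decompositions of the two sides can be glued, since a clique lies in a
   single bag (the Helly property of subtrees of a tree); hence tw G is attained
   on an induced subgraph without clique cutset.  If {u,v} is a proper
   2-cutset, each cl(C) contains the edge uv, so decompositions of the cl(C)
   glue along {u,v} and tw G <= max_C tw cl(C).  Conversely, when G has no
   clique cutset some other component D of G \ {u,v} sees both u and v, and
   contracting D exhibits cl*(C), and hence cl(C), as a minor of G.
   For a C with tw G <= tw cl(C), 2-cutset safety puts cl(C) or cl*(C) into F,
   and the bound by prime graphs follows by induction on the number of
   vertices. *)

Section Connect.
Variable T : finType.
Implicit Types e : rel T.

Lemma connect_ind e (P : T -> Prop) x y :
  connect e x y -> P x -> (forall a b, e a b -> P a -> P b) -> P y.
Proof.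
move=> /connectP[p pth ->] Px step.
elim: p x pth Px => //= z p IH x /andP[exz pz] Px.
exact: IH pz (step _ _ exz Px).
Qed.

Lemma connect_mono e e' : subrel e e' -> subrel (connect e) (connect e').
Proof. by move=> ee'; apply: connect_sub => x y /ee'/connect1. Qed.

Lemma connect_first_step e x y : connect e x y -> x != y -> exists z, e x z.
Proof.
move=> /connectP[[|z p] /= pth ->]; first by rewrite eqxx.
by move=> _; exists z; case/andP: pth.
Qed.
End Connect.

Lemma connect_homo (T1 T2 : finType) (e1 : rel T1) (e2 : rel T2) (g : T1 -> T2) :
  {homo g : x y / e1 x y >-> e2 x y} ->
  {homo g : x y / connect e1 x y >-> connect e2 x y}.
Proof.
move=> hom x y c.
apply: (connect_ind (P := fun z => connect e2 (g x) (g z))) c (connect0 _ _) _.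
by move=> a b /hom eab xa; apply: connect_trans xa (connect1 eab).
Qed.

(** * Tree decompositions *)

Definition deg (T : finType) (r : rel T) (i : T) := #|[set j | r i j]|.

(* Trees on any finite type; the edge count of [is_tree] is replaced by the
   handshake identity, which is what survives gluing and leaf deletion. *)
Definition fin_tree (T : finType) (r : rel T) : Prop :=
  [/\ 0 < #|T|, symmetric r, irreflexive r, (forall i j, connect r i j) &
      \sum_i deg r i = 2 * (#|T|).-1].

Lemma sum_deg (T : finType) (r : rel T) :
  \sum_i deg r i = #|[set p : T * T | r p.1 p.2]|.
Proof.
transitivity (\sum_i \sum_(j | r i j) 1).
  by apply: eq_bigr => i _; rewrite sum1_card; apply: eq_card => j; rewrite inE.
by rewrite pair_big_dep sum1_card; apply: eq_card => p; rewrite inE.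
Qed.

Lemma card_sym_pairs m (r : rel 'I_m) : symmetric r -> irreflexive r ->
  #|[set p : 'I_m * 'I_m | r p.1 p.2]| =
  2 * #|[set p : 'I_m * 'I_m | (val p.1 < val p.2) && r p.1 p.2]|.
Proof.
move=> rs ri.
set L := [set p : 'I_m * 'I_m | (val p.1 < val p.2) && r p.1 p.2].
pose sw (p : 'I_m * 'I_m) := (p.2, p.1).
have swK : involutive sw by case.
have -> : [set p : 'I_m * 'I_m | r p.1 p.2] = L :|: sw @: L.
  apply/setP=> -[a b]; rewrite !inE /=; apply/idP/idP.
  - move=> rab; case: (ltngtP (val a) (val b)) => h.
    + by apply/orP; left; apply/andP.
    + by apply/orP; right; apply/imsetP; exists (b, a); rewrite // inE /= h rs.
    + by move: rab; rewrite (val_inj h) ri.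
  - case/orP; first by case/andP.
    by case/imsetP=> -[c d]; rewrite inE /= => /andP[_ h] [-> ->]; rewrite rs.
rewrite cardsU; have -> : L :&: sw @: L = set0.
  apply/setP=> -[a b]; rewrite !inE /=; apply/negP=> /andP[/andP[h _] /imsetP[[c d]]].
  by rewrite inE /= => /andP[h' _] [e1 e2]; subst; lia.
by rewrite cards0 subn0 card_imset ?mul2n ?addnn //; apply: inv_inj.
Qed.

Lemma is_tree_fin_tree m (r : rel 'I_m) : is_tree r <-> fin_tree r.
Proof.
split.
- case=> m0 rs ri rc ec; split=> //; first by rewrite card_ord.
  by rewrite sum_deg card_sym_pairs // ec card_ord.
- case; rewrite card_ord => m0 rs ri rc ec; split=> //.
  by move: ec; rewrite sum_deg card_sym_pairs //; lia.
Qed.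

Definition bag_rel (V N : finType) (r : rel N) (B : N -> {set V}) (x : V) : rel N :=
  [rel a b | r a b && (x \in B a) && (x \in B b)].

Definition tree_dec (V N : finType) (e : rel V) (S : {set V}) (k : nat)
  (r : rel N) (B : N -> {set V}) : Prop :=
  fin_tree r /\
  [/\ forall i, B i \subset S,
      forall x, x \in S -> exists i, x \in B i,
      forall x y, x \in S -> y \in S -> e x y -> exists i, (x \in B i) && (y \in B i),
      forall x i j, x \in B i -> x \in B j -> connect (bag_rel r B x) i j &
      forall i, #|B i| <= k.+1].

(* Decompositions of [e] restricted to [S]; the bag containing [Z] is where
   two decompositions are glued. *)
Definition tdec (V : finType) (e : rel V) (S : {set V}) (k : nat) (Z : {set V}) : Prop :=
  exists (N : finType) (r : rel N) (B : N -> {set V}),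
    tree_dec e S k r B /\ exists i, Z \subset B i.

Lemma tdec_weaken (V : finType) (e e' : rel V) S k k' (Z Z' : {set V}) :
  subrel e' e -> k <= k' -> Z' \subset Z -> tdec e S k Z -> tdec e' S k' Z'.
Proof.
move=> ee kk ZZ [N [r [B [[tr [sub cov edg con siz]] [i0 hi0]]]]].
exists N, r, B; split; last by exists i0; apply: subset_trans hi0.
split=> //; split=> // [x y xS yS /ee|i]; first exact: edg.
exact: leq_trans (siz i) _.
Qed.

Lemma tdec_of_tw_le (H : graph) (V : finType) (f : vert H -> V) (e : rel V)
  (S : {set V}) k :
  injective f -> (forall x, f x \in S) -> (forall y, y \in S -> exists x, f x = y) ->
  (forall x y, e (f x) (f y) -> adj H x y) -> tw_le H k -> tdec e S k set0.
Proof.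
move=> finj fS fsurj fe [m [r [B [tr cov edg con siz]]]].
exists 'I_m, r, (fun i => f @: B i); split; last first.
  by case: tr => m0 _ _ _ _; exists (Ordinal m0); rewrite sub0set.
split; first exact/is_tree_fin_tree.
split.
- by move=> i; apply/subsetP=> y /imsetP[x _ ->].
- by move=> y /fsurj[x <-]; have [i hi] := cov x; exists i; apply: imset_f.
- move=> y1 y2 /fsurj[x1 <-] /fsurj[x2 <-] /fe /edg[i /andP[h1 h2]].
  by exists i; rewrite !imset_f.
- move=> y i j /imsetP[x1 h1 ->] /imsetP[x2 h2 /finj e12]; subst x2.
  apply: connect_mono (con _ _ _ h1 h2) => a b /andP[/andP[rab ha] hb].
  by rewrite /bag_rel /= rab !imset_f.
- by move=> i; apply: leq_trans (leq_imset_card _ _) (siz i).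
Qed.

Lemma tw_le_of_tdec (G : graph) k Z : tdec (adj G) setT k Z -> tw_le G k.
Proof.
move=> [N [r [B [[[n0 rs ri rc sd] [_ cov edg con siz]] _]]]].
pose ev := enum_val : 'I_#|N| -> N; pose rk := enum_rank : N -> 'I_#|N|.
have evK : cancel ev rk := @enum_valK N.
have rkK : cancel rk ev := @enum_rankK N.
have ev_bij : bijective ev by exists rk.
exists #|N|, (fun a b => r (ev a) (ev b)), (fun a => B (ev a)); split.
- apply/is_tree_fin_tree; split.
  + by rewrite card_ord.
  + by move=> a b; rewrite /= rs.
  + by move=> a; rewrite /= ri.
  + move=> a b; rewrite -(evK a) -(evK b).
    by apply: (connect_homo (e1 := r)) (rc _ _) => x y; rewrite !rkK.
  + rewrite card_ord -sd (reindex ev) /=; last exact: onW_bij _ ev_bij.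
    apply: eq_bigr => a _; rewrite /deg -[RHS](on_card_preimset (onW_bij _ ev_bij)).
    by apply: eq_card => j; rewrite !inE.
- by move=> x; have [i hi] := cov x (in_setT x); exists (rk i); rewrite rkK.
- by move=> x y /(edg _ _ (in_setT x) (in_setT y))[i hi]; exists (rk i); rewrite rkK.
- move=> x a b ha hb; rewrite -(evK a) -(evK b).
  by apply: (connect_homo (e1 := bag_rel r B x)) (con _ _ _ ha hb) => c d /=; rewrite !rkK.
- by move=> a; apply: siz.
Qed.

Lemma tw_leP (G : graph) k : reflect (tw_le G k) (tw_leb G k).
Proof. by rewrite /tw_leb; case: excluded_middle_informative => h; constructor. Qed.

Lemma tw_le_tw (G : graph) : tw_le G (tw G).
Proof. by rewrite /tw; case: ex_minnP => n /tw_leP. Qed.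

Lemma tw_le_leq (G : graph) k : tw_le G k -> tw G <= k.
Proof. by rewrite /tw => /tw_leP h; case: ex_minnP => n _ /(_ k h). Qed.

Lemma tdec_single (V : finType) (e : rel V) (Z : {set V}) k :
  #|Z| <= k.+1 -> tdec e Z k Z.
Proof.
move=> hZ; exists unit, [rel _ _ | false], (fun _ => Z); split; last by exists tt.
split; split=> //.
- by rewrite card_unit.
- by move=> [] []; rewrite connect0.
- rewrite card_unit big1 // => i _; apply/eqP; rewrite cards_eq0.
  by apply/eqP/setP=> j; rewrite !inE.
- by move=> x y xZ yZ _; exists tt; rewrite xZ yZ.
- by move=> x [] [] _ _; rewrite connect0.
Qed.

Lemma tw_gt0_of_adj (H : graph) (x y : vert H) : adj H x y -> 0 < tw H.
Proof.
move=> xy; rewrite lt0n; apply/negP=> /eqP tw0.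
have [m [r [B [_ _ edg _ siz]]]] := tw_le_tw H; rewrite tw0 in siz.
have [i /andP[xi yi]] := edg _ _ xy.
by move: xy; rewrite ((card_le1_eqP (siz i)) x y xi yi) adj_irr.
Qed.

Definition minor_model (H G : graph) (phi : vert H -> {set vert G}) : Prop :=
  [/\ forall h, phi h != set0,
      forall h h', h != h' -> [disjoint phi h & phi h'],
      forall h, connected_on (phi h) &
      forall a b, adj H a b -> exists x y, [/\ x \in phi a, y \in phi b & adj G x y]].

Lemma card_meeting_le (V I : finType) (phi : I -> {set V}) (X : {set V}) :
  (forall h h', h != h' -> [disjoint phi h & phi h']) ->
  #|[set h | [exists x, (x \in phi h) && (x \in X)]]| <= #|X|.
Proof.
move=> dj; pose f h := [pick x in phi h :&: X].
have fP h : h \in [set h | [exists x, (x \in phi h) && (x \in X)]] ->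
    exists2 x, f h = Some x & x \in phi h :&: X.
  rewrite inE /f => /existsP[x xh]; case: pickP => [z zh|/(_ x)]; last by rewrite inE xh.
  by exists z.
have finj : {in [set h | [exists x, (x \in phi h) && (x \in X)]] &, injective f}.
  move=> h h' /fP[x -> xh] /fP[y -> yh] [exy]; subst y.
  apply/eqP; apply/negPn/negP => /dj /disjoint_setI0 /setP /(_ x).
  by move: xh yh; rewrite !inE => /andP[-> _] /andP[-> _].
rewrite -(card_in_imset finj) -[#|X|](card_imset _ (@Some_inj _)).
apply/subset_leq_card/subsetP => o /imsetP[h /fP[x -> xh] ->].
by apply: imset_f; move: xh; rewrite inE => /andP[].
Qed.

Lemma tw_le_minor (H G : graph) (phi : vert H -> {set vert G}) k :
  minor_model phi -> tw_le G k -> tw_le H k.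
Proof.
move=> [ne dj cn ed] [m [r [B [tr cov edg con siz]]]].
pose B' i := [set h | [exists x, (x \in phi h) && (x \in B i)]].
have inB' h i x : x \in phi h -> x \in B i -> h \in B' i.
  by move=> h1 h2; rewrite inE; apply/existsP; exists x; rewrite h1.
exists m, r, B'; split=> //.
- move=> h; have /set0Pn[x hx] := ne h; have [i hi] := cov x.
  by exists i; apply: inB' hx hi.
- move=> a b /ed[x [y [hx hy xy]]]; have [i /andP[h1 h2]] := edg _ _ xy.
  by exists i; rewrite (inB' _ _ _ hx h1) (inB' _ _ _ hy h2).
- move=> h i j; rewrite !inE => /existsP[a /andP[ha hai]] /existsP[b /andP[hb hbj]].
  have lift c : c \in phi h -> subrel (connect (bag_rel r B c)) (connect (bag_rel r B' h)).
    move=> hc; apply: connect_mono => p q /andP[/andP[rpq hp] hq].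
    by rewrite /bag_rel /= rpq (inB' _ _ _ hc hp) (inB' _ _ _ hc hq).
  apply: (connect_ind (P := fun c => forall j, c \in B j ->
            connect (bag_rel r B' h) i j)) (cn h a b ha hb) _ _ j hbj.
  + by move=> j' hj'; apply: lift ha _ _ (con _ _ _ hai hj').
  + move=> c d /andP[/andP[hc hd] cd] Pc j' hj'.
    have [t /andP[ct dt]] := edg _ _ cd.
    exact: connect_trans (Pc _ ct) (lift _ hd _ _ (con _ _ _ dt hj')).
- by move=> i; apply: leq_trans (siz i); apply: card_meeting_le.
Qed.

Lemma tw_minor (H G : graph) (phi : vert H -> {set vert G}) :
  minor_model phi -> tw H <= tw G.
Proof. by move=> mm; apply/tw_le_leq/(tw_le_minor mm)/tw_le_tw. Qed.

(** * A clique lies in one bag *)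

Definition del_leaf_rel (N : finType) (r : rel N) (l : N) : rel {i : N | i != l} :=
  [rel a b | r (val a) (val b)].
Arguments del_leaf_rel {N} r l.

Section LeafDeletion.
Variables (N : finType) (r : rel N) (l p : N).
Hypotheses (rs : symmetric r) (rlP : forall c, r l c = (c == p)) (pl : p != l).

Local Notation N' := {i : N | i != l}.

Lemma connect_del_leaf (e : rel N) (a b : N') :
  subrel e r -> connect e (val a) (val b) ->
  connect [rel x y : N' | e (val x) (val y)] a b.
Proof.
move=> er c; pose e' := [rel x y : N' | e (val x) (val y)].
have el c' : e l c' -> c' = p by move/er; rewrite rlP => /eqP.
have el' c' : e c' l -> c' = p by move/er; rewrite rs rlP => /eqP.
(* a walk through the leaf [l] enters and leaves it via [p] *)
suff [+ _] : (val b != l -> connect e' a (insubd a (val b))) /\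
             (val b = l -> connect e' a (insubd a p)).
  by move/(_ (valP b)); rewrite valKd.
apply: (connect_ind (P := fun c => (c != l -> connect e' a (insubd a c)) /\
   (c = l -> connect e' a (insubd a p)))) c _ _.
  by split=> [_|h]; [rewrite valKd | move: (valP a); rewrite h eqxx].
move=> c d ecd [Pc1 Pc2]; split=> [dl|dl].
- case: (eqVneq c l) => [cl|cl].
  + by subst c; rewrite (el _ ecd); apply: Pc2.
  + by apply: connect_trans (Pc1 cl) (connect1 _); rewrite /= !insubdK.
- by subst d; rewrite -(el' _ ecd); apply: Pc1; rewrite (el' _ ecd).
Qed.

Lemma fin_tree_del_leaf : fin_tree r -> fin_tree (del_leaf_rel r l).
Proof.
case=> n0 _ ri rc sd.
have cardN' : #|{: N'}| = #|N|.-1 by rewrite card_sig cardC1.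
have sum_del (F : N -> nat) : \sum_(a : N') F (val a) = \sum_(i | i != l) F i.
  symmetry; rewrite (reindex (val : N' -> N)) /=; last first.
    exists (insubd (Sub p pl : N')) => a; rewrite ?inE => h.
      exact: valKd.
    exact: insubdK.
  by apply: eq_bigl => a; rewrite (valP a).
have deg_del a : deg (del_leaf_rel r l) a + (val a == p) = deg r (val a).
  rewrite /deg (cardsD1 l [set j | r (val a) j]) inE rs rlP addnC; congr (_ + _).
  have -> : [set j | r (val a) j] :\ l = val @: [set b | del_leaf_rel r l a b].
    apply/setP=> j; rewrite !inE; apply/andP/imsetP.
    - by move=> [jl rj]; exists (Sub j jl); rewrite ?inE.
    - by move=> [b]; rewrite inE => rb ->; rewrite (valP b).
  by rewrite card_imset //; exact: val_inj.
split.
- by rewrite cardN' -subn1 subn_gt0 (cardD1 l) (cardD1 p) !inE pl.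
- by move=> a b; rewrite /del_leaf_rel /= rs.
- by move=> a; rewrite /del_leaf_rel /= ri.
- by move=> a b; apply: connect_del_leaf.
- have sum_eqp : \sum_(a : N') (val a == p) = 1.
    rewrite (sum_del (fun i => nat_of_bool (i == p))) (bigD1 p) //= eqxx big1 //.
    by move=> i /andP[_ /negbTE ->].
  have := sd; rewrite (bigD1 l) //= {1}/deg.
  rewrite (eq_card (B := pred1 p)) ?card1; last by move=> j; rewrite inE rlP.
  rewrite -(sum_del (deg r)) -(eq_bigr _ (fun a _ => deg_del a)) big_split /= sum_eqp.
  by rewrite cardN' -!subn1; lia.
Qed.
End LeafDeletion.

Lemma fin_tree_leaf (N : finType) (r : rel N) : fin_tree r -> 1 < #|N| ->
  exists l p, p != l /\ forall c, r l c = (c == p).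
Proof.
case=> _ _ ri rc sd N2.
have [l dl] : exists l, deg r l <= 1.
  case: (boolP [exists l, deg r l <= 1]) => [/existsP //|].
  rewrite negb_exists => /forallP h.
  have : \sum_(i : N) 2 <= \sum_i deg r i.
    by apply: leq_sum => i _; rewrite ltnNge h.
  rewrite sd sum_nat_const (eq_card (B := N)) // mulnC leq_mul2l /=.
  by rewrite leqNgt ltn_predL (ltnW N2).
have /card_gt0P[j] : 0 < #|[predD1 N & l]| by move: N2; rewrite (cardD1 l) inE.
rewrite inE => /andP[jl _].
have [p rlp] : exists p, r l p by apply: connect_first_step (rc l j) _; rewrite eq_sym.
have dlp : [set j | r l j] = [set p].
  by apply/eqP; rewrite eq_sym eqEcard sub1set inE rlp cards1.
exists l, p; split => [|c]; last by rewrite -in_set1 -dlp inE.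
by apply: contraTneq rlp => ->; rewrite ri.
Qed.

Lemma tree_dec_helly (V N : finType) (r : rel N) (B : N -> {set V}) (K : {set V}) :
  fin_tree r ->
  (forall x i j, x \in B i -> x \in B j -> connect (bag_rel r B x) i j) ->
  (forall x y, x \in K -> y \in K -> exists i, (x \in B i) && (y \in B i)) ->
  exists i, K \subset B i.
Proof.
have [n] := ubnP #|N|; elim: n V N r B K => // n IH V N r B K /ltnSE cardN.
move=> tr con pairs.
have [N1|N2] := leqP #|N| 1.
  case: tr => /card_gt0P[i0 _] _ _ _ _; exists i0; apply/subsetP => x xK.
  have [i /andP[xi _]] := pairs _ _ xK xK.
  by rewrite ((card_le1_eqP N1) i i0).
have [l [p [pl rlP]]] := fin_tree_leaf tr N2.
have [Kl|/subsetPn[x0 x0K x0l]] := boolP (K \subset B l); first by exists l.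
have rs : symmetric r by case: tr.
(* [z] shares a bag [j != l] with [x0], and the [z]-path from [l] to [j]
   starts with the edge [l p] *)
have K_lp z : z \in K -> z \in B l -> z \in B p.
  move=> zK zl; have [j /andP[zj x0j]] := pairs _ _ zK x0K.
  have jl : l != j by apply: contraNneq x0l => ->.
  have [c /andP[/andP[rlc _] zc]] := connect_first_step (con _ _ _ zl zj) jl.
  by move: zc; rewrite rlP in rlc; rewrite (eqP rlc).
have [||||a Ka] := IH V _ (del_leaf_rel r l) (fun a => B (val a)) K.
- by rewrite card_sig cardC1 -ltnS prednK ?(ltnW N2).
- exact: fin_tree_del_leaf.
- move=> x a b xa xb; apply: connect_del_leaf (con _ _ _ xa xb) => //.
  by move=> c d /andP[/andP[]].
- move=> x y xK yK; have [i /andP[xi yi]] := pairs _ _ xK yK.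
  have [il|il] := eqVneq i l; last by exists (Sub i il); rewrite /= xi yi.
  by subst i; exists (Sub p pl); rewrite /= !K_lp.
- by exists (val a).
Qed.

Lemma tdec_clique_bag (V : finType) (e : rel V) S k Z (K : {set V}) :
  tdec e S k Z -> K \subset S -> {in K &, forall x y, x != y -> e x y} ->
  tdec e S k K.
Proof.
move=> [N [r [B [[tr [sub cov edg con siz]] _]]]] KS Kc.
exists N, r, B; split; first by split.
apply: tree_dec_helly tr con _ => x y xK yK.
have [<-|xy] := eqVneq x y.
  by have [i hi] := cov x (subsetP KS _ xK); exists i; rewrite hi.
exact: edg (subsetP KS _ xK) (subsetP KS _ yK) (Kc _ _ xK yK xy).
Qed.

(** * Gluing along a clique *)

Section Glue.
Variables (N1 N2 : finType) (r1 : rel N1) (r2 : rel N2) (i1 : N1) (i2 : N2).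

Definition glue_rel (x y : N1 + N2) : bool :=
  match x, y with
  | inl a, inl b => r1 a b
  | inr a, inr b => r2 a b
  | inl a, inr b | inr b, inl a => (a == i1) && (b == i2)
  end.

Lemma fin_tree_glue : fin_tree r1 -> fin_tree r2 -> fin_tree glue_rel.
Proof.
move=> [n1 rs1 ri1 rc1 sd1] [n2 rs2 ri2 rc2 sd2].
have c1 : {homo inl : a b / connect r1 a b >-> connect glue_rel a b}.
  by apply: connect_homo.
have c2 : {homo inr : a b / connect r2 a b >-> connect glue_rel a b}.
  by apply: connect_homo.
have e12 : glue_rel (inl i1) (inr i2) by rewrite /= !eqxx.
have e21 : glue_rel (inr i2) (inl i1) by rewrite /= !eqxx.
have via_i1 x : connect glue_rel x (inl i1) /\ connect glue_rel (inl i1) x.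
  case: x => [a|b]; first by split; apply: c1.
  split; first exact: connect_trans (c2 _ _ (rc2 b i2)) (connect1 e21).
  exact: connect_trans (connect1 e12) (c2 _ _ (rc2 i2 b)).
have degE (T : finType) (r : rel T) x : deg r x = \sum_j (r x j : nat).
  by rewrite /deg -big_mkcond /= sum1_card; apply: eq_card => j; rewrite inE.
have sum_eq1 (T : finType) (t : T) : \sum_(a : T) nat_of_bool (a == t) = 1.
  by rewrite (bigD1 t) //= eqxx big1 // => a /negbTE ->.
have deg_l a : deg glue_rel (inl a) = deg r1 a + (a == i1).
  rewrite !degE big_sumType /=; congr (_ + _).
  by case: (a == i1) => /=; [apply: sum_eq1 | rewrite big1].
have deg_r b : deg glue_rel (inr b) = deg r2 b + (b == i2).
  rewrite !degE big_sumType /= addnC; congr (_ + _).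
  rewrite (eq_bigr (fun a => nat_of_bool (a == i1) * (b == i2))); last first.
    by move=> a _; case: (a == i1); case: (b == i2).
  by rewrite -big_distrl /= sum_eq1 mul1n.
split.
- by rewrite card_sum addn_gt0 n1.
- by case=> a [b|b] //=; rewrite ?rs1 ?rs2.
- by case=> a /=; rewrite ?ri1 ?ri2.
- by move=> x y; apply: connect_trans (proj1 (via_i1 x)) (proj2 (via_i1 y)).
- rewrite card_sum big_sumType /= (eq_bigr _ (fun a _ => deg_l a)).
  rewrite (eq_bigr _ (fun b _ => deg_r b)) !big_split /= !sum_eq1 sd1 sd2.
  move: n1 n2; case: #|N1| => // a _; case: #|N2| => // b _.
  by rewrite addSn /=; lia.
Qed.
End Glue.

Definition glue_bag (V N1 N2 : finType) (B1 : N1 -> {set V}) (B2 : N2 -> {set V})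
  (x : N1 + N2) : {set V} :=
  match x with inl a => B1 a | inr b => B2 b end.

Lemma separated_edge (V : finType) (e : rel V) (A B : {set V}) x y :
  symmetric e -> (forall x y, x \in A :\: B -> y \in B :\: A -> ~~ e x y) ->
  x \in A :|: B -> y \in A :|: B -> e x y ->
  (x \in A) && (y \in A) || (x \in B) && (y \in B).
Proof.
move=> es sep; rewrite !in_setU.
case xA: (x \in A); case xB: (x \in B); case yA: (y \in A); case yB: (y \in B) => //= _ _ exy.
- by move: (sep x y); rewrite !in_setD xA xB yA yB exy => /(_ isT isT).
- by move: (sep y x); rewrite !in_setD xA xB yA yB es exy => /(_ isT isT).
Qed.

Lemma tdec_glue (V : finType) (e : rel V) (A B Z : {set V}) k :
  symmetric e -> tdec e A k Z -> tdec e B k Z -> A :&: B \subset Z ->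
  (forall x y, x \in A :\: B -> y \in B :\: A -> ~~ e x y) ->
  tdec e (A :|: B) k Z.
Proof.
move=> es [N1 [r1 [B1 [[tr1 [sub1 cov1 edg1 con1 siz1]] [i1 Z1]]]]].
move=> [N2 [r2 [B2 [[tr2 [sub2 cov2 edg2 con2 siz2]] [i2 Z2]]]]] ABZ sep.
pose r := glue_rel r1 r2 i1 i2; pose Bg := glue_bag B1 B2.
exists (N1 + N2)%type, r, Bg; split; last by exists (inl i1).
split; first exact: fin_tree_glue.
have L1 x : {homo inl : a b / connect (bag_rel r1 B1 x) a b >-> connect (bag_rel r Bg x) a b}.
  by apply: connect_homo.
have L2 x : {homo inr : a b / connect (bag_rel r2 B2 x) a b >-> connect (bag_rel r Bg x) a b}.
  by apply: connect_homo.
split.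
- by case=> [a|b] /=; [apply: subset_trans (sub1 a) (subsetUl _ _) |
                       apply: subset_trans (sub2 b) (subsetUr _ _)].
- move=> x; rewrite inE => /orP[/cov1[i hi]|/cov2[i hi]].
  + by exists (inl i).
  + by exists (inr i).
- move=> x y xAB yAB exy; case/orP: (separated_edge es sep xAB yAB exy) => /andP[xS yS].
  + by have [i hi] := edg1 _ _ xS yS exy; exists (inl i).
  + by have [i hi] := edg2 _ _ xS yS exy; exists (inr i).
- have in_Z x a b : x \in B1 a -> x \in B2 b -> (x \in B1 i1) && (x \in B2 i2).
    move=> xa xb; have xZ : x \in Z.
      by apply: (subsetP ABZ); rewrite inE (subsetP (sub1 a)) ?(subsetP (sub2 b)).
    by rewrite (subsetP Z1) ?(subsetP Z2).
  move=> x [a|a] [b|b] /= ha hb.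
  + exact: L1 (con1 _ _ _ ha hb).
  + have /andP[z1 z2] := in_Z _ _ _ ha hb.
    apply: connect_trans (L1 _ _ _ (con1 _ _ _ ha z1)) _.
    apply: connect_trans (L2 _ _ _ (con2 _ _ _ z2 hb)).
    by apply: connect1; rewrite /bag_rel /= !eqxx z1 z2.
  + have /andP[z1 z2] := in_Z _ _ _ hb ha.
    apply: connect_trans (L2 _ _ _ (con2 _ _ _ ha z2)) _.
    apply: connect_trans (L1 _ _ _ (con1 _ _ _ z1 hb)).
    by apply: connect1; rewrite /bag_rel /= !eqxx z1 z2.
  + exact: L2 (con2 _ _ _ ha hb).
- by case=> [a|b] /=.
Qed.

Lemma tdec_glue_clique (V : finType) (e : rel V) (A B : {set V}) k :
  symmetric e -> tdec e A k set0 -> tdec e B k set0 ->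
  {in A :&: B &, forall x y, x != y -> e x y} ->
  (forall x y, x \in A :\: B -> y \in B :\: A -> ~~ e x y) ->
  tdec e (A :|: B) k (A :&: B).
Proof.
move=> es tdA tdB ABc sep.
apply: tdec_glue => //.
- by apply: tdec_clique_bag tdA (subsetIl _ _) ABc.
- by apply: tdec_clique_bag tdB (subsetIr _ _) ABc.
Qed.

(** * Components and clique cutsets *)

Section GraphBasics.
Variable G : graph.
Implicit Types (S D K : {set vert G}) (x y : vert G).

Lemma connect_in_sym S x y : connect_in S x y -> connect_in S y x.
Proof.
have sym : symmetric [rel a b : vert G | (a \in S) && (b \in S) && adj G a b].
  by move=> a b /=; rewrite [(a \in S) && _]andbC adj_sym.
by rewrite /connect_in (sym_connect_sym sym).
Qed.

Lemma connect_in_closed S D x y :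
  (forall a b, a \in D -> a \in S -> b \in S -> adj G a b -> b \in D) ->
  x \in D -> connect_in S x y -> y \in D.
Proof.
move=> cl xD c; apply: (connect_ind (P := fun z => z \in D)) c xD _.
by move=> a b /andP[/andP[aS bS] ab] aD; apply: cl aD aS bS ab.
Qed.


Lemma connect_in_edge S x y : x \in S -> y \in S -> adj G x y -> connect_in S x y.
Proof. by move=> xS yS xy; apply: connect1; rewrite /= xS yS. Qed.

Lemma connected_single (a : vert G) : connected_on [set a].
Proof. by move=> x y; rewrite !inE => /eqP-> /eqP->; apply: connect0. Qed.

Lemma connected_pair (a b : vert G) : adj G a b -> connected_on [set a; b].
Proof.
move=> ab x y; rewrite !inE => /orP[]/eqP-> /orP[]/eqP->; try apply: connect0.
- by apply: connect_in_edge; rewrite ?inE ?eqxx ?orbT.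
- by apply: connect_in_edge; rewrite ?inE ?eqxx ?orbT // adj_sym.
Qed.

Definition comp S x := [set z in S | connect_in S x z].

Lemma mem_comp S x : x \in S -> x \in comp S x.
Proof. by move=> xS; rewrite inE xS /connect_in connect0. Qed.

Lemma comp_component S x : x \in S -> is_component S (comp S x).
Proof.
move=> xS.
have in_comp z : connect_in S x z -> connect_in (comp S x) x z.
  move=> c; suff [] : connect_in S x z /\ connect_in (comp S x) x z by [].
  apply: (connect_ind (P := fun z => connect_in S x z /\ connect_in (comp S x) x z)) c _ _.
    by split; apply: connect0.
  move=> a b ab [c1 c2]; have c1' : connect_in S x b by apply: connect_trans c1 (connect1 ab).
  split=> //; apply: connect_trans c2 (connect1 _).
  by case/andP: ab => /andP[aS bS] ab; rewrite /= !inE aS bS c1 c1' ab.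
split.
- by apply/subsetP=> z; rewrite inE => /andP[].
- by apply/set0Pn; exists x; apply: mem_comp.
- move=> z w; rewrite !inE => /andP[_ cz] /andP[_ cw].
  exact: connect_trans (connect_in_sym (in_comp _ cz)) (in_comp _ cw).
- move=> z w; rewrite !inE => /andP[zS cz] wS zw; rewrite wS.
  exact: connect_trans cz (connect_in_edge zS wS zw).
Qed.

Lemma component_sub S C D :
  is_component S C -> D \subset S ->
  (forall a b, a \in D -> b \in S -> adj G a b -> b \in D) ->
  C :&: D != set0 -> C \subset D.
Proof.
move=> [CS Cne Ccon Ccl] DS Dcl /set0Pn[z]; rewrite inE => /andP[zC zD].
apply/subsetP=> w wC; apply: (connect_in_closed (D := D)) zD (Ccon _ _ zC wC).
by move=> a b aD aC bC ab; apply: Dcl aD (subsetP CS _ bC) ab.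
Qed.

Lemma component_comp S C x : is_component S C -> x \in C -> C = comp S x.
Proof.
move=> Cc xC; have [CS _ _ Ccl] := Cc; have xS := subsetP CS _ xC.
have cc := comp_component xS; have [cS _ _ ccl] := cc.
have meet : C :&: comp S x != set0 by apply/set0Pn; exists x; rewrite inE xC mem_comp.
apply/eqP; rewrite eqEsubset (component_sub Cc cS ccl meet).
by rewrite (component_sub cc CS Ccl) // setIC.
Qed.

Definition clique_cutset_in S : Prop :=
  exists K, [/\ K \subset S, is_clique K &
    exists x y, [/\ x \in S :\: K, y \in S :\: K & ~ connect_in (S :\: K) x y]].

Lemma clique_cutset_induced S : has_clique_cutset (induced S) <-> clique_cutset_in S.
Proof.
split.
- move=> [K [Kc [x [y [xK [yK nc]]]]]].
  exists (val @: K); split.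
  + by apply/subsetP=> z /imsetP[w _ ->]; exact: (valP w).
  + move=> a b /imsetP[a' a'K ->] /imsetP[b' b'K ->] ab.
    by apply: (Kc _ _ a'K b'K); apply: contraNneq ab => ->.
  + exists (val x), (val y); rewrite !inE !(mem_imset _ _ val_inj) xK yK (valP x) (valP y).
    split=> // c; apply: nc.
    suff /(_ _ _ c) : {homo insubd x : a b /
        connect_in (S :\: val @: K) a b >-> connect_in (~: K) a b} by rewrite !valKd.
    apply: connect_homo => a b /andP[/andP[]]; rewrite !inE => /andP[aK aS] /andP[bK bS] ab.
    rewrite /= /ind_adj !insubdK // ab andbT; apply/andP; split.
      by rewrite inE; apply: contra aK => h; rewrite -(insubdK x aS); apply: imset_f.
    by rewrite inE; apply: contra bK => h; rewrite -(insubdK x bS); apply: imset_f.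
- move=> [K [KS Kc [x [y [xK yK nc]]]]].
  have xS : x \in S by move: xK; rewrite inE => /andP[].
  have yS : y \in S by move: yK; rewrite inE => /andP[].
  exists [set z : vert (induced S) | val z \in K]; split.
    by move=> a b; rewrite !inE => aK bK ab; apply: Kc.
  exists (Sub x xS), (Sub y yS); move: xK yK; rewrite !inE /= => /andP[-> _] /andP[-> _].
  split=> //; split=> // c; apply: nc.
  apply: (connect_homo (g := val)) c => a b; rewrite /= !inE => /andP[/andP[aK bK] ab].
  by rewrite aK bK (valP a) (valP b).
Qed.

Lemma clique_cutset_setT : has_clique_cutset G <-> clique_cutset_in setT.
Proof.
have E K : ~: K = setT :\: K by rewrite setTD.
split.
- move=> [K [Kc [x [y [xK [yK nc]]]]]]; exists K; split=> //.
  by exists x, y; rewrite -E; split=> //; rewrite !inE ?xK ?yK.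
- move=> [K [_ Kc [x [y [xK yK nc]]]]]; exists K; split=> //.
  exists x, y; move: xK yK; rewrite !inE ?andbT => xK yK.
  by split=> //; split=> //; rewrite E.
Qed.

Lemma no_clique_cutset_connected : ~ has_clique_cutset G -> connectedG G.
Proof.
move=> ncc x y; apply/negPn/negP => nc; apply: ncc.
exists set0; split; first by move=> a b; rewrite inE.
exists x, y; rewrite !inE; split=> //; split=> // c; apply: (negP nc).
by apply: connect_mono c => a b /andP[].
Qed.

Lemma no_clique_cutset_no_1cutset : ~ has_clique_cutset G -> ~ has_1cutset G.
Proof.
move=> ncc [_ [x [y [z [yx [zx nc]]]]]]; apply: ncc.
exists [set x]; split; first by move=> a b; rewrite !inE => /eqP-> /eqP->; rewrite eqxx.
by exists y, z; rewrite !inE yx zx; split.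
Qed.
End GraphBasics.

Lemma clique_cutset_split (G : graph) (S : {set vert G}) : clique_cutset_in S ->
  exists A B : {set vert G}, [/\ A \proper S, B \proper S, A :|: B = S,
    is_clique (A :&: B) & forall x y, x \in A :\: B -> y \in B :\: A -> ~~ adj G x y].
Proof.
move=> [K [KS Kc [x0 [y0 [x0K y0K nc]]]]].
pose C := comp (S :\: K) x0.
have [CSK _ _ Ccl] := comp_component x0K.
have x0C : x0 \in C by apply: mem_comp.
have y0C : y0 \notin C by rewrite inE y0K; apply/negP.
have CS : C \subset S by apply: subset_trans CSK (subsetDl _ _).
have CK z : z \in C -> z \notin K by move/(subsetP CSK); rewrite inE => /andP[].
have x0S : x0 \in S by move: x0K; rewrite inE => /andP[].
have y0S : y0 \in S by move: y0K; rewrite inE => /andP[].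
exists (C :|: K), (S :\: C); split.
- rewrite properEneq subUset CS KS !andbT; apply/eqP => /setP/(_ y0).
  by rewrite in_setU (negbTE y0C) y0S /=; move: y0K; rewrite in_setD y0S andbT => /negbTE ->.
- by rewrite properEneq subsetDl andbT; apply/eqP => /setP/(_ x0); rewrite in_setD x0C x0S.
- apply/setP => z; rewrite !in_setU in_setD.
  have [zC|zC] /= := boolP (z \in C); first by rewrite (subsetP CS).
  by have [/(subsetP KS) ->|] := boolP (z \in K).
- suff -> : (C :|: K) :&: (S :\: C) = K by [].
  apply/setP => z; rewrite in_setI in_setU in_setD.
  have [zC|zC] /= := boolP (z \in C); first by rewrite (negbTE (CK _ zC)).
  by have [/(subsetP KS) ->|] := boolP (z \in K).
- move=> x y; rewrite !in_setD !in_setU => /andP[xCS /orP[xC|xK]]; last first.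
    have xC : x \notin C by apply: contraL xK; apply: CK.
    by rewrite xC (subsetP KS _ xK) in xCS.
  case/and3P => /norP[yC yK] _ yS; apply: contra yC => /(Ccl x y xC).
  by apply; rewrite in_setD yK.
Qed.

Lemma tdec_induced (G : graph) (S : {set vert G}) : tdec (adj G) S (tw (induced S)) set0.
Proof.
apply: (tdec_of_tw_le (H := induced S) (f := val)) (tw_le_tw _) => //.
- exact: val_inj.
- by move=> x; exact: (valP x).
- by move=> y yS; exists (Sub y yS).
Qed.

Lemma tdec_clique_cutset_free (G : graph) (S : {set vert G}) :
  exists S' : {set vert G}, [/\ S' \subset S, ~ has_clique_cutset (induced S') &
                 tdec (adj G) S (tw (induced S')) set0].
Proof.
have [n] := ubnP #|S|; elim: n S => // n IH S /ltnSE cardS.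
have [/clique_cutset_induced hcc|ncc] := classic (has_clique_cutset (induced S)); last first.
  by exists S; split=> //; apply: tdec_induced.
have [A [B [AS BS <- ABc sep]]] := clique_cutset_split hcc.
have [SA [SAA ncA tdA]] := IH A (leq_trans (proper_card AS) cardS).
have [SB [SBB ncB tdB]] := IH B (leq_trans (proper_card BS) cardS).
set kA := tw (induced SA) in tdA; set kB := tw (induced SB) in tdB.
have tdAB : tdec (adj G) (A :|: B) (maxn kA kB) (A :&: B).
  apply: tdec_glue_clique ABc sep; first exact: adj_sym.
  - by apply: tdec_weaken tdA; rewrite ?leq_maxl.
  - by apply: tdec_weaken tdB; rewrite ?leq_maxr.
have [kAB|kBA] := leqP kA kB.
- exists SB; split=> //; first exact: subset_trans SBB (subsetUr _ _).
  by apply: tdec_weaken tdAB; rewrite ?sub0set // (maxn_idPr kAB).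
- exists SA; split=> //; first exact: subset_trans SAA (subsetUl _ _).
  by apply: tdec_weaken tdAB; rewrite ?sub0set // (maxn_idPl (ltnW kBA)).
Qed.

(** * Proper 2-cutsets *)

Section TwoCutsetGluing.
Variables (G : graph) (u v : vert G).
Hypothesis uv : u != v.
Local Notation W := [set u; v].

(* the adjacency of [cl u v C], read on the vertices of [G] *)
Definition cl_rel : rel (vert G) :=
  fun a b => adj G a b || (a != b) && ([set a; b] == W).

Lemma cl_rel_sym : symmetric cl_rel.
Proof. by move=> a b; rewrite /cl_rel adj_sym eq_sym [[set b; a]]setUC. Qed.

Lemma cl_rel_clique : {in W &, forall a b, a != b -> cl_rel a b}.
Proof.
move=> a b; rewrite !inE => /orP[]/eqP-> /orP[]/eqP->; rewrite ?eqxx // => ab;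
  by rewrite /cl_rel ab /= ?[[set v; u]]setUC eqxx orbT.
Qed.

Lemma tdec_cl C : tdec cl_rel (C :|: W) (tw (cl u v C)) set0.
Proof.
apply: (tdec_of_tw_le (H := cl u v C) (f := val)) (tw_le_tw _) => //.
- exact: val_inj.
- by move=> y; exact: (valP y).
- by move=> y yS; exists (Sub y yS).
Qed.

Lemma component_cl_rel_sep C x y :
  is_component (~: W) C -> x \in C -> y \notin C :|: W -> ~~ cl_rel x y.
Proof.
move=> [_ _ _ Ccl] xC; rewrite in_setU negb_or => /andP[yC yW].
have nxy : ~~ adj G x y by apply: contra yC; apply: Ccl xC _; rewrite in_setC.
rewrite /cl_rel negb_or nxy /=.
by apply: contra yW => /andP[_ /eqP <-]; rewrite !inE eqxx orbT.
Qed.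

Lemma tdec_components k (U : {set vert G}) : 0 < k ->
  (forall C, is_component (~: W) C -> tw (cl u v C) <= k) ->
  U \subset ~: W -> (forall a b, a \in U -> b \in ~: W -> adj G a b -> b \in U) ->
  tdec cl_rel (U :|: W) k W.
Proof.
move=> k0 twC; have [n] := ubnP #|U|; elim: n U => // n IH U /ltnSE cardU US Ucl.
have [->|/set0Pn[x xU]] := eqVneq U set0.
  by rewrite set0U; apply: tdec_single; rewrite cards2 uv.
have xW := subsetP US _ xU.
pose C := comp (~: W) x.
have Cc : is_component (~: W) C := comp_component xW.
have [_ _ _ Ccl] := Cc.
have CU : C \subset U.
  by apply: component_sub Cc US Ucl _; apply/set0Pn; exists x; rewrite inE mem_comp.
pose U' := U :\: C.
have tdU' : tdec cl_rel (U' :|: W) k W.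
  apply: IH.
  - apply: leq_trans cardU; apply: proper_card; rewrite properEneq subsetDl andbT.
    by apply/eqP => /setP/(_ x); rewrite in_setD mem_comp // xU.
  - exact: subset_trans (subsetDl _ _) US.
  - move=> a b; rewrite !in_setD => /andP[aC aU] bW ab; rewrite (Ucl _ _ aU bW ab) andbT.
    by apply: contra aC => bC; apply: Ccl bC (subsetP US _ aU) _; rewrite adj_sym.
have tdC : tdec cl_rel (C :|: W) k set0 by apply: tdec_weaken (tdec_cl C); rewrite ?twC.
have UW : U :|: W = (C :|: W) :|: (U' :|: W).
  by rewrite -setUUl /U' -{1}(setIidPr CU) setID.
have CU'W : (C :|: W) :&: (U' :|: W) = W.
  by rewrite -setUIl setIDA setDIl setDv set0I set0U.
suff : tdec cl_rel ((C :|: W) :|: (U' :|: W)) k ((C :|: W) :&: (U' :|: W)).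
  by rewrite -UW CU'W.
apply: tdec_glue_clique tdC _ _ _; first exact: cl_rel_sym.
- by apply: tdec_weaken tdU'; rewrite ?sub0set.
- by rewrite CU'W; apply: cl_rel_clique.
- move=> a b /setDP[aCW aU'W] /setDP[_ bCW]; apply: component_cl_rel_sep Cc _ bCW.
  by move: aCW aU'W; rewrite in_setU => /orP[// | aW]; rewrite in_setU aW orbT.
Qed.

Lemma tw_le_two_cutset k : 0 < k ->
  (forall C, is_component (~: W) C -> tw (cl u v C) <= k) -> tw G <= k.
Proof.
move=> k0 twC; apply/tw_le_leq/(tw_le_of_tdec (Z := W)).
have := tdec_components k0 twC (subxx _) (fun a b _ bW _ => bW).
rewrite setUC setUCr; apply: tdec_weaken => // a b ab.
by rewrite /cl_rel ab.
Qed.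
End TwoCutsetGluing.

Section ProperTwoCutsetSides.
Variables (G : graph) (u v : vert G) (X : {set vert G}).
Local Notation W := [set u; v].
Hypothesis anti : forall x y, x \in X -> y \in ~: W :\: X -> ~~ adj G x y.

Lemma side_closed a b : a \in X -> b \in ~: W -> adj G a b -> b \in X.
Proof. by move=> aX bW; apply: contraTT => bX; apply: anti aX _; rewrite in_setD bX. Qed.

Lemma coside_closed a b : a \in ~: W :\: X -> b \in ~: W -> adj G a b -> b \in ~: W :\: X.
Proof.
move=> aY bW ab; rewrite in_setD bW andbT; apply: contraTN ab => bX.
by rewrite adj_sym; apply: anti bX aY.
Qed.
End ProperTwoCutsetSides.

Lemma proper_2cutset_two_cutset (G : graph) (u v : vert G) :
  proper_2cutset u v -> two_cutset u v.
Proof.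
move=> [uv [X [XW X2 Y2 anti]]]; split=> //.
have [x xX] := card_gt0P (ltnW X2); have [y yY] := card_gt0P (ltnW Y2).
have yW : y \in ~: [set u; v] by move: yY; rewrite in_setD => /andP[].
exists x, y; split; first by have := subsetP XW _ xX; rewrite in_setC.
split; first by move: yW; rewrite in_setC.
move=> c; have yX : y \in X.
  by apply: connect_in_closed xX c => a b aX _ bW; exact: side_closed anti a b aX bW.
by rewrite in_setD yX in yY.
Qed.

Lemma proper_2cutset_far_side (G : graph) (u v : vert G) C :
  proper_2cutset u v -> is_component (~: [set u; v]) C ->
  exists2 Z : {set vert G}, 1 < #|Z| &
    [/\ Z \subset ~: [set u; v], [disjoint C & Z] &
        forall a b, a \in Z -> b \in ~: [set u; v] -> adj G a b -> b \in Z].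
Proof.
move=> [_ [X [XW X2 Y2 anti]]] Cc; have [CW /set0Pn[c cC] _ _] := Cc.
have XY : [disjoint X & ~: [set u; v] :\: X].
  by rewrite -setI_eq0 setIDA setDIl setDv set0I.
have [cX|cX] := boolP (c \in X).
- have CX : C \subset X.
    by apply: component_sub Cc XW (side_closed anti) _; apply/set0Pn; exists c; rewrite inE cC.
  exists (~: [set u; v] :\: X) => //; split; first exact: subsetDl.
  + exact: disjointWl CX XY.
  + exact: coside_closed anti.
- have CY : C \subset ~: [set u; v] :\: X.
    apply: component_sub Cc (subsetDl _ _) (coside_closed anti) _.
    by apply/set0Pn; exists c; rewrite in_setI in_setD cC cX (subsetP CW).
  exists X => //; split=> //; last exact: side_closed anti.
  by rewrite disjoint_sym in XY; exact: disjointWl CY XY.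
Qed.

(* Otherwise [{v}] would be a clique cutset separating [D] from [C]. *)
Lemma disjoint_component_adj (G : graph) (u v : vert G) C D :
  ~ has_clique_cutset G ->
  is_component (~: [set u; v]) C -> is_component (~: [set u; v]) D ->
  [disjoint C & D] -> exists2 d, d \in D & adj G d u.
Proof.
move=> ncc [CW /set0Pn[c cC] _ _] [DW /set0Pn[w wD] _ Dcl] CD.
apply: NNPP => nadj; apply: ncc.
exists [set v]; split; first by move=> a b; rewrite !inE => /eqP-> /eqP->; rewrite eqxx.
have nv z : z \in ~: [set u; v] -> z \notin [set v] by rewrite !inE negb_or => /andP[_].
exists w, c; split; first exact: nv (subsetP DW _ wD).
split; first exact: nv (subsetP CW _ cC).
move=> wc; have cD : c \in D.
  apply: connect_in_closed wD wc => a b aD _ bv ab.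
  have bu : b != u by apply/negP => /eqP bu; apply: nadj; exists a; rewrite -?bu.
  by apply: Dcl aD _ ab; rewrite !inE negb_or bu; move: bv; rewrite !inE.
by rewrite (disjointFr CD cC) in cD.
Qed.

Lemma other_full_component (G : graph) (u v : vert G) C :
  ~ has_clique_cutset G -> proper_2cutset u v -> is_component (~: [set u; v]) C ->
  exists D : {set vert G}, [/\ is_component (~: [set u; v]) D, [disjoint C & D],
    (exists2 d, d \in D & adj G d u) & (exists2 d, d \in D & adj G d v)].
Proof.
move=> ncc p2 Cc; have [Z Z2 [ZW CZ Zcl]] := proper_2cutset_far_side p2 Cc.
have [w wZ] := card_gt0P (ltnW Z2); have wW := subsetP ZW _ wZ.
pose D := comp (~: [set u; v]) w.
have Dc : is_component (~: [set u; v]) D := comp_component wW.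
have DZ : D \subset Z.
  by apply: component_sub Dc ZW Zcl _; apply/set0Pn; exists w; rewrite inE mem_comp.
have CD := disjointWr DZ CZ.
exists D; split=> //; first exact: disjoint_component_adj ncc Cc Dc CD.
by rewrite setUC in Cc Dc; exact: disjoint_component_adj ncc Cc Dc CD.
Qed.

Lemma set_pair_cases (T : finType) (a b u v : T) :
  [set a; b] = [set u; v] -> a != b -> (a = u /\ b = v) \/ (a = v /\ b = u).
Proof.
move=> e ab.
have : a \in [set u; v] by rewrite -e !inE eqxx.
have : b \in [set u; v] by rewrite -e !inE eqxx orbT.
move: ab; rewrite !inE => ab /orP[]/eqP bu /orP[]/eqP au; subst a b;
  rewrite ?eqxx // in ab; by [left|right].
Qed.

Lemma tw_clstar_le (G : graph) (u v : vert G) (C D : {set vert G}) :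
  is_component (~: [set u; v]) D -> [disjoint C & D] ->
  (exists2 d, d \in D & adj G d u) -> (exists2 d, d \in D & adj G d v) ->
  tw (clstar u v C) <= tw G.
Proof.
move=> [DS Dne Dcon _] CD [du duD duu] [dv dvD dvv].
pose phi (o : vert (clstar u v C)) : {set vert G} :=
  match o with Some x => [set val x] | None => D end.
have notD (x : clV u v C) : val x \notin D.
  have := valP x; rewrite in_setU => /orP[xC|xuv].
    by rewrite (disjointFr CD xC).
  by apply/negP=> /(subsetP DS); rewrite in_setC xuv.
apply: (tw_minor (phi := phi)); split.
- case=> [x|] //=; apply/set0Pn; by exists (val x); rewrite inE.
- case=> [x|] [y|] //= xy.
  + rewrite disjoints1 inE; apply: contra xy => /eqP e.
    by apply/eqP; congr Some; apply: val_inj.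
  + by rewrite disjoints1 notD.
  + by rewrite disjoint_sym disjoints1 notD.
- case=> [x|] /=; [exact: connected_single | exact: Dcon].
- case=> [x|] [y|] //=.
  + move=> /andP[xy _]; exists (val x), (val y); by rewrite !inE.
  + case: x => x' hx' /= /orP[]/eqP e; subst x'.
    * by exists u, du; rewrite inE eqxx duD adj_sym.
    * by exists v, dv; rewrite inE eqxx dvD adj_sym.
  + case: y => y' hy' /= /orP[]/eqP e; subst y'.
    * by exists du, u; rewrite inE eqxx duD.
    * by exists dv, v; rewrite inE eqxx dvD.
Qed.

Lemma tw_cl_le_clstar (G : graph) (u v : vert G) (C : {set vert G}) :
  tw (cl u v C) <= tw (clstar u v C).
Proof.
pose phi (x : vert (cl u v C)) : {set vert (clstar u v C)} :=
  if val x == u then [set Some x; None] else [set Some x].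
have inphi x : Some x \in phi x by rewrite /phi; case: ifP; rewrite !inE eqxx.
have Nphi x : val x = u -> None \in phi x by rewrite /phi => ->; rewrite eqxx !inE eqxx orbT.
have phiP x o : o \in phi x -> o = Some x \/ (o = None /\ val x = u).
  rewrite /phi; case: ifP => [/eqP xu|_]; rewrite !inE.
    by case/orP => /eqP->; [left | right].
  by move=> /eqP->; left.
apply: (tw_minor (phi := phi)); split.
- by move=> x; apply/set0Pn; exists (Some x).
- move=> x y xy; apply/pred0P => o /=; apply/negP=> /andP[/phiP ox /phiP oy].
  case: ox oy => [->|[-> xu]] [|[]] //.
  + by case=> e; rewrite e eqxx in xy.
  + by move=> _ yu; apply: (negP xy); apply/eqP/val_inj; rewrite xu yu.
- move=> x; rewrite /phi; case: ifP => [/eqP xu|_]; last exact: connected_single.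
  by apply: connected_pair; rewrite /= xu eqxx.
- move=> x y h.
  have xyne : val x != val y.
    case/orP: h => [xy|/andP[//]]; apply/eqP=> e'; move: xy.
    by rewrite /= e' adj_irr.
  case: (boolP ([set val x; val y] == [set u; v])) => [/eqP e|ne].
  + case: (set_pair_cases e xyne) => [[xu yv]|[xv yu]].
    * exists None, (Some y); rewrite Nphi // inphi /= yv eqxx orbT; split=> //.
    * exists (Some x), None; rewrite Nphi // inphi /= xv eqxx orbT; split=> //.
  + case/orP: h => [xy|/andP[_ e]]; last by rewrite e in ne.
    by exists (Some x), (Some y); rewrite !inphi /= xy ne.
Qed.

Lemma tw_cl_gt0 (G : graph) (u v : vert G) C : u != v -> 0 < tw (cl u v C).
Proof.
move=> uv.
have uC : u \in C :|: [set u; v] by rewrite !inE eqxx orbT.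
have vC : v \in C :|: [set u; v] by rewrite !inE eqxx !orbT.
apply: (@tw_gt0_of_adj (cl u v C) (Sub u uC) (Sub v vC)).
by rewrite /= /cl_adj /= uv eqxx orbT.
Qed.

Lemma tw_induced (G : graph) (S : {set vert G}) : tw (induced S) <= tw G.
Proof.
apply: (tw_minor (phi := fun x : vert (induced S) => [set val x])); split.
- by move=> x; apply/set0Pn; exists (val x); rewrite inE.
- move=> x y xy; rewrite disjoints1 inE; apply: contra xy => /eqP e.
  by apply/eqP; apply: val_inj.
- by move=> x; apply: connected_single.
- by move=> a b ab; exists (val a), (val b); rewrite !inE !eqxx.
Qed.

(** * Prime decompositions *)

Lemma tw_le_clique_cutset_free (G : graph) : exists S : {set vert G},
  [/\ ~ has_clique_cutset (induced S), tw G <= tw (induced S) &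
      has_clique_cutset G -> #|S| < #|vert G|].
Proof.
have [S [_ ncc tdS]] := tdec_clique_cutset_free [set: vert G].
exists S; split=> //; first exact/tw_le_leq/(tw_le_of_tdec tdS).
move=> /clique_cutset_setT cc; rewrite -cardsT; apply: proper_card.
by rewrite properT; apply/eqP => ST; apply: ncc; rewrite ST; apply/clique_cutset_induced.
Qed.


Lemma exists_component_tw_ge (G : graph) (u v : vert G) : proper_2cutset u v ->
  exists2 C, is_component (~: [set u; v]) C & tw G <= tw (cl u v C).
Proof.
move=> [uv [X [XW X2 _ _]]].
have [x xX] := card_gt0P (ltnW X2); have xW := subsetP XW _ xX.
case: (arg_maxnP (fun z => tw (cl u v (comp (~: [set u; v]) z))) xW) => z zW zmax.
exists (comp (~: [set u; v]) z); first exact: comp_component.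
apply: (tw_le_two_cutset uv (tw_cl_gt0 _ uv)) => C Cc.
have [CW /set0Pn[c cC] _ _] := Cc.
by rewrite (component_comp Cc cC); apply: zmax; apply: (subsetP CW).
Qed.

Lemma card_clb_lt (G : graph) (u v : vert G) C b : proper_2cutset u v ->
  is_component (~: [set u; v]) C -> #|vert (clb u v C b)| < #|vert G|.
Proof.
move=> p2 Cc; have [Z Z2 [ZW CZ _]] := proper_2cutset_far_side p2 Cc.
have ZCW : Z \subset ~: (C :|: [set u; v]).
  by rewrite setCU subsetI ZW andbT -disjoints_subset disjoint_sym.
have sizeG : #|C :|: [set u; v]| + #|Z| <= #|vert G|.
  by rewrite -(cardsC (C :|: [set u; v])) leq_add2l subset_leq_card.
have sizeCl : #|vert (clb u v C b)| <= #|C :|: [set u; v]|.+1.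
  by case: b; rewrite /= ?card_option card_sig (eq_card (B := C :|: [set u; v])).
by move: Z2 sizeG sizeCl; lia.
Qed.

Lemma tw_clb_le (G : graph) (u v : vert G) C b :
  ~ has_clique_cutset G -> proper_2cutset u v -> is_component (~: [set u; v]) C ->
  tw (clb u v C b) <= tw G.
Proof.
move=> ncc p2 Cc; have [D [Dc CD du dv]] := other_full_component ncc p2 Cc.
have := tw_clstar_le Dc CD du dv.
by case: b => //=; apply: leq_trans (tw_cl_le_clstar u v C).
Qed.

Section SafeClass.
Variables (F : graph -> Prop) (hF : hereditary F) (hS : two_cutset_safe F).

Lemma safe_component_tw_ge (G : graph) (u v : vert G) :
  F G -> ~ has_clique_cutset G -> proper_2cutset u v ->
  exists C b, [/\ is_component (~: [set u; v]) C, F (clb u v C b) &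
                  tw G <= tw (clb u v C b)].
Proof.
move=> FG ncc p2; have [C Cc twC] := exists_component_tw_ge p2.
have := hS FG (no_clique_cutset_connected ncc) (no_clique_cutset_no_1cutset ncc)
           (proper_2cutset_two_cutset p2) Cc.
case=> FC; [exists C, false | exists C, true]; split=> //.
exact: leq_trans twC (tw_cl_le_clstar u v C).
Qed.

Lemma pdec_tw i G H : pdec F i G H -> F G -> tw G = tw H.
Proof.
elim=> {i G H} // [i G S H _ _ _ maxS _ IH | i G u v C b H _ _ ncc p2 Cc FC maxC _ IH] FG.
- rewrite -(IH (hF.2 _ _ FG)); apply/eqP; rewrite eqn_leq tw_induced andbT.
  have [S' [ncc' le' _]] := tw_le_clique_cutset_free G.
  exact: leq_trans le' (maxS _ ncc').
- rewrite -(IH FC); apply/eqP; rewrite eqn_leq (tw_clb_le b ncc p2 Cc) andbT.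
  have [C' [b' [Cc' FC' le']]] := safe_component_tw_ge FG ncc p2.
  exact: leq_trans le' (maxC _ _ Cc' FC').
Qed.

Lemma exists_prime_tw_ge G : F G -> exists J, [/\ F J, is_prime J & tw G <= tw J].
Proof.
have [n] := ubnP #|vert G|; elim: n G => // n IH G /ltnSE sizeG FG.
have [pr|npr] := classic (is_prime G); first by exists G.
have [cc|ncc] := classic (has_clique_cutset G).
  have [S [_ twS ltS]] := tw_le_clique_cutset_free G.
  have [|J [FJ pJ twJ]] := IH (induced S) _ (hF.2 _ _ FG).
    by rewrite card_sig (eq_card (B := S)) //; apply: leq_trans (ltS cc) sizeG.
  by exists J; split=> //; apply: leq_trans twS twJ.
have [u [v p2]] : exists u v : vert G, proper_2cutset u v.
  by apply: NNPP => h; apply: npr; split.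
have [C [b [Cc FC twC]]] := safe_component_tw_ge FG ncc p2.
have [|J [FJ pJ twJ]] := IH (clb u v C b) _ FC.
  exact: leq_trans (card_clb_lt b p2 Cc) sizeG.
by exists J; split=> //; apply: leq_trans twC twJ.
Qed.
End SafeClass.

Theorem mainTheorem3 (t : nat) (ht : 0 < t) (F : graph -> Prop)
  (hF : hereditary F) (hS : two_cutset_safe F) (G : graph) (hG : F G) :
  (forall H : graph, prime_base F G H -> tw G = tw H) /\
  (exists J : graph, [/\ F J, is_prime J & tw G <= tw J]).
Proof.
split; first by move=> H pd; apply: (pdec_tw hF hS pd hG).
exact: (exists_prime_tw_ge hF hS hG).
Qed.
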